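(* A function $f : X \to \mathbb{R}$ is of Baire class 1 if and only if both $f$ and $-f$ are limsup functions.
   Context: Let $A$ be a non-empty countable set and $T$ a pruned tree on $A$ (a set of finite sequences of elements of $A$, closed under initial segments, in which every sequence has a proper extension in $T$). Let $X$ be the set of infinite branches of $T$, with the topology generated by the cylinder sets $O(s) = \{x \in X : s \text{ is an initial segment of } x\}$, $s \in T$. A function $f : X \to \mathbb{R}$ is a limsup function if there exists $u : T \to \mathbb{R}$ with $f(x) = \limsup_{t\to\infty} u(x_0,\dots,x_t)$ for every $x \in X$. Baire class 1 means a pointwise limit of a sequence of continuous functions $X \to \mathbb{R}$. *)

From Stdlib Require Import Reals List.
From Coquelicot Require Import Coquelicot.
Import ListNotations.
Open Scope R_scope.

Section Trees.
Variable A : Type.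

Definition pre (x : nat -> A) (n : nat) : list A := map x (seq 0 n).

Definition is_tree (T : list A -> Prop) : Prop :=
  forall s t : list A, T (s ++ t) -> T s.

Definition is_pruned (T : list A -> Prop) : Prop :=
  forall s : list A, T s -> exists t : list A, t <> [] /\ T (s ++ t).

Definition countable : Prop := exists g : A -> nat, forall a b, g a = g b -> a = b.

Variable Tr : list A -> Prop.

Definition is_branch (x : nat -> A) : Prop := forall n, Tr (pre x n).
Definition branches : Type := { x : nat -> A | is_branch x }.

Definition initial_segment (s : list A) (x : branches) : Prop :=
  s = pre (proj1_sig x) (length s).

Definition cyl (s : list A) (x : branches) : Prop := initial_segment s x.

(* open sets of the topology generated by the cylinders O(s), s in T:
   unions of finite intersections of cylinders *)
Definition branch_open (U : branches -> Prop) : Prop :=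
  forall x, U x ->
    exists ss : list (list A),
      List.Forall Tr ss /\ List.Forall (fun s => cyl s x) ss /\
      forall y, List.Forall (fun s => cyl s y) ss -> U y.

Definition branch_continuous (g : branches -> R) : Prop :=
  forall V : R -> Prop, open_set V -> branch_open (fun x => V (g x)).

Definition baire_class1 (f : branches -> R) : Prop :=
  exists g : nat -> branches -> R,
    (forall n, branch_continuous (g n)) /\
    forall x, is_lim_seq (fun n => g n x) (f x).

(* limsup function: f(x) = limsup_t u(x_0,...,x_t) for some u on T
   (u is given on all finite sequences; only its values on T matter) *)
Definition limsup_function (f : branches -> R) : Prop :=
  exists u : list A -> R,
    forall x : branches,
      LimSup_seq (fun t => u (pre (proj1_sig x) (S t))) = Finite (f x).

End Trees.

From Pilot Require Import Defs.
From Stdlib Require Import Reals List ClassicalEpsilon Lia Lra.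
From Coquelicot Require Import Coquelicot.
Import ListNotations.
Open Scope R_scope.

(* (=>) Let g_n be continuous with g_n -> f.  For a finite sequence s put
        u(s) := g_k(y_s), where y_s is a fixed branch through s and k <= |s| is
        the largest index for which g_k oscillates by less than 1/(k+1) on the
        cylinder O(s).  By continuity this index tends to infinity along every
        branch x, so u(x|t) -> f(x); in particular f = limsup u.  Applying this to
        (-g_n) gives the statement for -f.
   (<=) If limsup a = c and limsup a' = -c for real sequences a, a', the numbers
        limsup_approx a a' n (a windowed maximum of a, with window chosen from
        a and a' up to time n) converge to c.  With a, a' read along the branch
        (a(t) = u(x|t+1)), the n-th approximant depends only on x|n+1, hence is
        continuous, and it converges to f(x).

   The argument
   never uses that A is countable or that the tree is pruned. *)

(* A largest index j <= m satisfying P (or 0 if none), and its properties. *)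
Fixpoint last_index (P : nat -> Prop) (m : nat) : nat :=
  match m with
  | O => O
  | S m' => if excluded_middle_informative (P (S m')) then S m' else last_index P m'
  end.

Lemma last_index_le (P : nat -> Prop) (m : nat) : (last_index P m <= m)%nat.
Proof.
  induction m as [|m IH]; simpl; [lia|].
  destruct excluded_middle_informative; lia.
Qed.

Lemma last_index_above (P : nat -> Prop) (m M : nat) :
  (0 < M)%nat -> (M <= m)%nat -> P M ->
  (M <= last_index P m)%nat /\ P (last_index P m).
Proof.
  intros HM0 HMm HPM. induction m as [|m IH]; simpl; [lia|].
  destruct excluded_middle_informative as [HP|HnP]; [split; [lia | exact HP]|].
  destruct (Nat.eq_dec M (S m)) as [->|Hne]; [contradiction|].
  apply IH. lia.
Qed.

Lemma last_index_ext (P Q : nat -> Prop) (m : nat) :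
  (forall j, (j <= m)%nat -> (P j <-> Q j)) -> last_index P m = last_index Q m.
Proof.
  induction m as [|m IH]; intros HPQ; simpl; [reflexivity|].
  rewrite IH by (intros j Hj; apply HPQ; lia).
  specialize (HPQ (S m) (le_n _)).
  destruct excluded_middle_informative, excluded_middle_informative; tauto.
Qed.

Lemma eventually_inv_succ_lt (eps : R) (K : nat) : 0 < eps ->
  exists M, (K <= M)%nat /\ (0 < M)%nat /\
    forall k, (M <= k)%nat -> / (INR k + 1) < eps.
Proof.
  intros Heps. destruct (archimed_cor1 eps Heps) as [M0 [HM0 HM0pos]].
  exists (M0 + K)%nat. split; [lia| split; [lia|]]. intros k Hk.
  assert (HM0k : INR M0 <= INR k) by (apply le_INR; lia).
  assert (0 < INR M0) by (apply lt_0_INR; exact HM0pos).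
  eapply Rlt_trans; [|exact HM0]. apply Rinv_lt_contravar; nra.
Qed.

Fixpoint win_max (a : nat -> R) (k d : nat) : R :=
  match d with
  | O => a k
  | S d' => Rmax (win_max a k d') (a (k + S d')%nat)
  end.

Lemma win_max_ge (a : nat -> R) (k d i : nat) :
  (i <= d)%nat -> a (k + i)%nat <= win_max a k d.
Proof.
  induction d as [|d IH]; intros Hi; simpl.
  - replace i with 0%nat by lia. rewrite Nat.add_0_r. apply Rle_refl.
  - destruct (Nat.eq_dec i (S d)) as [->|Hne]; [apply Rmax_r|].
    eapply Rle_trans; [apply IH; lia | apply Rmax_l].
Qed.

Lemma win_max_le (a : nat -> R) (k d : nat) (B : R) :
  (forall t, (k <= t)%nat -> a t <= B) -> win_max a k d <= B.
Proof.
  intros HB. induction d as [|d IH]; simpl; [apply HB; lia|].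
  apply Rmax_lub; [exact IH | apply HB; lia].
Qed.

Lemma win_max_ext (a b : nat -> R) (k d : nat) :
  (forall t, (t <= k + d)%nat -> a t = b t) -> win_max a k d = win_max b k d.
Proof.
  induction d as [|d IH]; intros Hab; simpl; [apply Hab; lia|].
  rewrite IH by (intros t Ht; apply Hab; lia).
  rewrite (Hab (k + S d)%nat) by lia. reflexivity.
Qed.

(* The window [k, n] is balanced when the maxima of a and a' over it nearly
   cancel: -max a' <= max a + 1/(k+1).  When limsup a = c = -limsup a', every
   fixed k is balanced for large n. *)
Definition balanced (a a' : nat -> R) (n k : nat) : Prop :=
  - win_max a' k (n - k) <= win_max a k (n - k) + / (INR k + 1).

Definition limsup_approx (a a' : nat -> R) (n : nat) : R :=
  let k := last_index (balanced a a' n) n in win_max a k (n - k).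

Lemma limsup_approx_ext (a a' b b' : nat -> R) (n : nat) :
  (forall t, (t <= n)%nat -> a t = b t /\ a' t = b' t) ->
  limsup_approx a a' n = limsup_approx b b' n.
Proof.
  intros Hab. unfold limsup_approx.
  assert (Hk : last_index (balanced a a' n) n = last_index (balanced b b' n) n).
  { apply last_index_ext. intros j Hj. unfold balanced.
    rewrite (win_max_ext a b), (win_max_ext a' b') by (intros t Ht; apply Hab; lia).
    tauto. }
  rewrite Hk. apply win_max_ext. intros t Ht. apply Hab.
  pose proof (last_index_le (balanced b b' n) n). lia.
Qed.

Lemma limsup_approx_lim (a a' : nat -> R) (c : R) :
  is_LimSup_seq a c -> is_LimSup_seq a' (- c) -> is_lim_seq (limsup_approx a a') c.
Proof.
  intros Ha Ha'. apply is_lim_seq_spec. intros eps.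
  destruct (Ha (pos_div_2 eps)) as [Ha_often [K Ha_below]].
  destruct (Ha' (pos_div_2 eps)) as [_ [K' Ha'_below]]. simpl in *.
  destruct (eventually_inv_succ_lt (eps / 2) (K + K') ltac:(destruct eps; simpl; lra))
    as [M [HKM [HM0 HMinv]]].
  set (d := / (INR M + 1) / 2).
  assert (Hd : 0 < d) by (unfold d; pose proof (pos_INR M);
    apply Rdiv_lt_0_compat; [apply Rinv_0_lt_compat|]; lra).
  destruct (Ha (mkposreal d Hd)) as [Ha_d _].
  destruct (Ha' (mkposreal d Hd)) as [Ha'_d _]. simpl in *.
  destruct (Ha_d M) as [t [HtM Hat]].
  destruct (Ha'_d M) as [t' [Ht'M Ha't']].
  exists (Nat.max t t'). intros n Hn.
  (* the window starting at M is balanced at time n, witnessed by t and t' *)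
  assert (HbalM : balanced a a' n M).
  { unfold balanced.
    pose proof (win_max_ge a M (n - M) (t - M) ltac:(lia)) as Et.
    pose proof (win_max_ge a' M (n - M) (t' - M) ltac:(lia)) as Et'.
    replace (M + (t - M))%nat with t in Et by lia.
    replace (M + (t' - M))%nat with t' in Et' by lia.
    unfold d in *. lra. }
  destruct (last_index_above (balanced a a' n) n M HM0 ltac:(lia) HbalM)
    as [HMk Hbalk].
  unfold limsup_approx. set (k := last_index (balanced a a' n) n) in *.
  unfold balanced in Hbalk.
  pose proof (HMinv k HMk) as Hkinv.
  assert (Hup : win_max a k (n - k) <= c + eps / 2).
  { apply win_max_le. intros s Hs. left. apply Ha_below. lia. }
  assert (Hup' : win_max a' k (n - k) <= - c + eps / 2).
  { apply win_max_le. intros s Hs. left. apply Ha'_below. lia. }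
  apply Rabs_def1; lra.
Qed.

Lemma lim_limsup (u : nat -> R) (l : R) : is_lim_seq u l -> LimSup_seq u = Finite l.
Proof. intros H. apply is_LimSup_seq_unique, is_lim_LimSup_seq, H. Qed.

Lemma limsup_is_limsup (u : nat -> R) (l : R) :
  LimSup_seq u = Finite l -> is_LimSup_seq u l.
Proof.
  intros H. destruct (ex_LimSup_seq u) as [l' Hl'].
  rewrite (is_LimSup_seq_unique _ _ Hl') in H. subst l'. exact Hl'.
Qed.

Section BranchSpace.

Variable A : Type.
Variable Tr : list A -> Prop.

Lemma pre_length (x : nat -> A) (n : nat) : length (Defs.pre A x n) = n.
Proof. unfold Defs.pre. rewrite length_map, length_seq. reflexivity. Qed.

Lemma pre_eq_iff (x y : nat -> A) (n : nat) :
  Defs.pre A x n = Defs.pre A y n <-> (forall i, (i < n)%nat -> x i = y i).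
Proof.
  unfold Defs.pre; split.
  - intros H i Hi.
    pose proof (f_equal (fun l => nth i l (x 0%nat)) H) as E. simpl in E.
    rewrite (nth_indep (map y (seq 0 n)) (x 0%nat) (y 0%nat)) in E
      by (rewrite length_map, length_seq; lia).
    rewrite !map_nth, !seq_nth in E by lia. exact E.
  - intros H. apply map_ext_in. intros a Ha. apply in_seq in Ha. apply H. lia.
Qed.

Lemma cyl_pre_iff (x : nat -> A) (n : nat) (y : branches A Tr) :
  cyl A Tr (Defs.pre A x n) y <-> (forall i, (i < n)%nat -> x i = proj1_sig y i).
Proof. unfold cyl, initial_segment. rewrite pre_length. apply pre_eq_iff. Qed.

Lemma cyl_self (x : branches A Tr) (n : nat) : cyl A Tr (Defs.pre A (proj1_sig x) n) x.
Proof. apply cyl_pre_iff. auto. Qed.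

Lemma cyl_pre_mono (x : nat -> A) (m n : nat) (y : branches A Tr) :
  (m <= n)%nat -> cyl A Tr (Defs.pre A x n) y -> cyl A Tr (Defs.pre A x m) y.
Proof.
  intros Hmn Hy. apply cyl_pre_iff. intros i Hi.
  apply (proj1 (cyl_pre_iff x n y) Hy). lia.
Qed.

Lemma max_length_ge (ss : list (list A)) (s : list A) :
  In s ss -> (length s <= fold_right Nat.max 0%nat (map (@length A) ss))%nat.
Proof.
  induction ss as [|s' ss IH]; simpl; [tauto|].
  intros [->|Hs]; [lia|]. specialize (IH Hs). lia.
Qed.

(* A continuous function varies by less than eps on a small enough cylinder
   around any point: a finite intersection of cylinders containing x contains
   the cylinder of a long enough prefix of x. *)
Lemma continuous_small_on_cylinder (h : branches A Tr -> R) :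
  branch_continuous A Tr h ->
  forall x eps, 0 < eps -> exists t, forall y,
    cyl A Tr (Defs.pre A (proj1_sig x) t) y -> Rabs (h y - h x) < eps.
Proof.
  intros Hh x eps Heps.
  set (V := fun r => Rabs (r - h x) < eps).
  assert (HV : open_set V).
  { intros r Hr. exists (mkposreal (eps - Rabs (r - h x)) ltac:(unfold V in Hr; lra)).
    intros z Hz. unfold disc in Hz; simpl in Hz. unfold V.
    replace (z - h x) with ((z - r) + (r - h x)) by ring.
    eapply Rle_lt_trans; [apply Rabs_triang | lra]. }
  destruct (Hh V HV x) as [ss [_ [Hxss Hss]]].
  { unfold V. rewrite Rminus_diag, Rabs_R0. exact Heps. }
  exists (fold_right Nat.max 0%nat (map (@length A) ss)). intros y Hy.
  apply Hss, Forall_forall. intros s Hs.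
  pose proof (proj1 (Forall_forall _ _) Hxss s Hs) as Hxs.
  unfold cyl, initial_segment in Hxs. rewrite Hxs.
  exact (cyl_pre_mono _ _ _ y (max_length_ge ss s Hs) Hy).
Qed.

Lemma prefix_determined_continuous (h : branches A Tr -> R) (n : nat) :
  (forall x y : branches A Tr,
     Defs.pre A (proj1_sig x) n = Defs.pre A (proj1_sig y) n -> h x = h y) ->
  branch_continuous A Tr h.
Proof.
  intros Hh V _ x HVx.
  exists [Defs.pre A (proj1_sig x) n]. split; [|split].
  - constructor; [apply (proj2_sig x) | constructor].
  - constructor; [apply cyl_self | constructor].
  - intros y Hy. inversion Hy as [|? ? Hxy _]; subst.
    rewrite (Hh y x); [exact HVx|].
    apply pre_eq_iff. intros i Hi. symmetry.
    apply (proj1 (cyl_pre_iff _ _ y) Hxy). exact Hi.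
Qed.

Lemma baire_class1_opp (f : branches A Tr -> R) :
  baire_class1 A Tr f -> baire_class1 A Tr (fun x => - f x).
Proof.
  intros [g [Hg Hlim]]. exists (fun n x => - g n x). split.
  - intros n V HV. apply (Hg n (fun r => V (- r))).
    intros r Hr. destruct (HV (- r) Hr) as [delta Hdelta].
    exists delta. intros z Hz. apply Hdelta. unfold disc in *.
    replace (- z - - r) with (- (z - r)) by ring. rewrite Rabs_Ropp. exact Hz.
  - intros x. apply (is_lim_seq_opp (fun n => g n x) (f x)), Hlim.
Qed.

Section Forward.

Variable g : nat -> branches A Tr -> R.

Definition small_oscillation (s : list A) (k : nat) : Prop :=
  forall y z, cyl A Tr s y -> cyl A Tr s z -> Rabs (g k y - g k z) < / (INR k + 1).

Definition limsup_witness (s : list A) : R :=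
  match excluded_middle_informative (exists y, cyl A Tr s y) with
  | left H =>
      g (last_index (small_oscillation s) (length s))
        (proj1_sig (constructive_indefinite_description _ H))
  | right _ => 0
  end.

Lemma limsup_witness_lim (f : branches A Tr -> R) :
  (forall n, branch_continuous A Tr (g n)) ->
  (forall x, is_lim_seq (fun n => g n x) (f x)) ->
  forall x, is_lim_seq (fun t => limsup_witness (Defs.pre A (proj1_sig x) (S t))) (f x).
Proof.
  intros Hg Hlim x. apply is_lim_seq_spec. intros eps.
  destruct (proj2 (is_lim_seq_spec _ _) (Hlim x) (pos_div_2 eps)) as [N HN].
  destruct (eventually_inv_succ_lt (eps / 2) N ltac:(destruct eps; simpl; lra))
    as [M [HNM [HM0 HMinv]]].
  set (d := / (INR M + 1) / 2).
  assert (Hd : 0 < d) by (unfold d; pose proof (pos_INR M);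
    apply Rdiv_lt_0_compat; [apply Rinv_0_lt_compat|]; lra).
  destruct (continuous_small_on_cylinder (g M) (Hg M) x d Hd) as [t0 Ht0].
  exists (Nat.max t0 M). intros t Ht.
  set (s := Defs.pre A (proj1_sig x) (S t)).
  assert (HoscM : small_oscillation s M).
  { intros y z Hy Hz.
    pose proof (Ht0 y (cyl_pre_mono _ t0 (S t) y ltac:(lia) Hy)) as Ey.
    pose proof (Ht0 z (cyl_pre_mono _ t0 (S t) z ltac:(lia) Hz)) as Ez.
    apply Rabs_def2 in Ey. apply Rabs_def2 in Ez. unfold d in *. apply Rabs_def1; lra. }
  unfold limsup_witness.
  destruct excluded_middle_informative as [Hne|Hne];
    [|exfalso; apply Hne; exists x; apply cyl_self].
  destruct (constructive_indefinite_description _ Hne) as [y Hy]. cbn [proj1_sig].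
  destruct (last_index_above (small_oscillation s) (length s) M HM0
              ltac:(unfold s; rewrite pre_length; lia) HoscM) as [HMk Hosck].
  set (k := last_index (small_oscillation s) (length s)) in *.
  pose proof (Hosck y x Hy (cyl_self x (S t))) as Eyx.
  pose proof (HN k ltac:(lia)) as Ek. simpl in Ek.
  pose proof (HMinv k HMk).
  apply Rabs_def2 in Eyx. apply Rabs_def2 in Ek. apply Rabs_def1; lra.
Qed.

End Forward.

Lemma baire_class1_limsup (f : branches A Tr -> R) :
  baire_class1 A Tr f -> limsup_function A Tr f.
Proof.
  intros [g [Hg Hlim]]. exists (limsup_witness g). intros x.
  apply lim_limsup, (limsup_witness_lim g f Hg Hlim).
Qed.

Lemma limsup_pair_baire_class1 (f : branches A Tr -> R) :
  limsup_function A Tr f -> limsup_function A Tr (fun x => - f x) ->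
  baire_class1 A Tr f.
Proof.
  intros [u Hu] [u' Hu'].
  set (along := fun (v : list A -> R) (x : branches A Tr) t =>
                  v (Defs.pre A (proj1_sig x) (S t))).
  exists (fun n x => limsup_approx (along u x) (along u' x) n). split.
  - intros n. apply (prefix_determined_continuous _ (S n)). intros x y Hxy.
    apply limsup_approx_ext. intros t Ht. unfold along.
    assert (Hpre : Defs.pre A (proj1_sig x) (S t) = Defs.pre A (proj1_sig y) (S t)).
    { apply pre_eq_iff. intros i Hi. apply (proj1 (pre_eq_iff _ _ _) Hxy). lia. }
    rewrite Hpre. split; reflexivity.
  - intros x. apply limsup_approx_lim; apply limsup_is_limsup; [apply Hu | apply Hu'].
Qed.

End BranchSpace.

Theorem mainTheorem5 (A : Type) (HA : inhabited A) (Hc : countable A)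
  (Tr : list A -> Prop) (Htree : is_tree A Tr) (Hpr : is_pruned A Tr)
  (f : branches A Tr -> R) :
  baire_class1 A Tr f <->
  (limsup_function A Tr f /\ limsup_function A Tr (fun x => - f x)).
Proof.
  split.
  - intros Hf. split.
    + exact (baire_class1_limsup A Tr f Hf).
    + exact (baire_class1_limsup A Tr _ (baire_class1_opp A Tr f Hf)).
  - intros [Hu Hu']. exact (limsup_pair_baire_class1 A Tr f Hu Hu').
Qed.
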